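(* Let $k$ be a field, $n\ge 5$ an integer, $q\in k$ a primitive $n$-th root of unity, and $\ell=n$ if $n$ is odd, $\ell=n/2$ if $n$ is even. Let $\mathcal{C}=(a_{ij})_{t\times t}$ be the Cartan matrix of a finite-dimensional semisimple simply laced Lie algebra. Let $\mathfrak{u}_q(\mathcal{C})$ and $\mathfrak{u}_q^{\mathcal{C}}$ be the Hopf algebras described in the context. For $x\in\mathbb{Z}_n^t$ put $\epsilon_x=\frac{1}{n^t}\sum_{y\in\mathbb{Z}_n^t}q^{-x\cdot y}K_y\in\mathfrak{u}_q(\mathcal{C})$. Then the map $\tau:\mathfrak{u}_q^{\mathcal{C}}\to\mathfrak{u}_q(\mathcal{C})$ defined on generators by $$\tau(e_x)=\epsilon_x,\qquad \tau(a(x,i))=\epsilon_x E_i,\qquad \tau(a(x,i)^* )=F_i\,\epsilon_x\qquad(x\in\mathbb{Z}_n^t,\ 1\le i\le t)$$ is a well-defined isomorphism of Hopf algebras.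
   Context: Notation: $\mathbb{Z}_n=\mathbb{Z}/n\mathbb{Z}$; $c^i\in\mathbb{Z}_n^t$ is the $i$-th column of $\mathcal{C}$ reduced mod $n$; for $x\in\mathbb{Z}_n^t$, $x_i$ is its $i$-th coordinate, and $q^{m}$ for $m\in\mathbb{Z}_n$ is well defined since $q^n=1$. For $\alpha,\beta\in\mathbb{Z}_n^t$, $\alpha\cdot\beta=\sum_i\alpha_i\beta_i$. For an indeterminate $x$: $[m]_x=\frac{x^m-x^{-m}}{x-x^{-1}}$, $[m]!_x=[m]_x\cdots[1]_x$, $[0]!_x=1$, $\begin{bmatrix} m\\ s\end{bmatrix}_x=\frac{[m]!_x}{[s]!_x[m-s]!_x}$. $K_y=K_1^{y_1}\cdots K_t^{y_t}$. $\mathfrak{u}_q(\mathcal{C})$: the $k$-algebra generated by $K_i,E_i,F_i$ ($1\le i\le t$) with relations $K_i^n=1$, $K_iK_j=K_jK_i$; $K_iE_jK_i^{-1}=q^{a_{ij}}E_j$, $K_iF_jK_i^{-1}=q^{-a_{ij}}F_j$; $E_iF_j-F_jE_i=\delta_{ij}\frac{K_i-K_i^{-1}}{q-q^{-1}}$; $E_i^\ell=0=F_i^\ell$; and for $i\neq j$, $\sum_{s=0}^{1-a_{ij}}(-1)^s\begin{bmatrix}1-a_{ij}\\ s\end{bmatrix}_qE_i^{1-a_{ij}-s}E_jE_i^s=0$ and the same with $F$ in place of $E$. Hopf structure: $\Delta(K_i)=K_i\otimes K_i$, $\Delta(E_i)=E_i\otimes1+K_i\otimes E_i$, $\Delta(F_i)=F_i\otimes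 K_i^{-1}+1\otimes F_i$, $\varepsilon(K_i)=1$, $\varepsilon(E_i)=\varepsilon(F_i)=0$, $S(K_i)=K_i^{-1}$, $S(E_i)=-K_i^{-1}E_i$, $S(F_i)=-F_iK_i$. Quiver: $\overline{\mathcal{Q}}$ has vertex set $\mathbb{Z}_n^t$ and arrows $a(x,i):x-c^i\to x$ and $a(x,i)^*:x\to x-c^i$ for $x\in\mathbb{Z}_n^t$, $1\le i\le t$. In the path algebra $k\overline{\mathcal{Q}}$ paths are composed right to left (the product $pp'$ of paths is their concatenation if the source of $p$ equals the target of $p'$, and $0$ otherwise); $e_x$ is the trivial path at $x$, so $e_xa(x,i)=a(x,i)e_{x-c^i}=a(x,i)$ and $a(x,i)^*e_x=e_{x-c^i}a(x,i)^*=a(x,i)^*$. Write $a(x,i_1i_2\cdots i_s)=a(x,i_1)a(x-c^{i_1},i_2)\cdots a(x-c^{i_1}-\cdots-c^{i_{s-1}},i_s)$, and $a(x,i_1\cdots i_s)^*=a(x-c^{i_1}-\cdots-c^{i_{s-1}},i_s)^*\cdots a(x-c^{i_1},i_2)^*a(x,i_1)^*$ (the reversed path); $a(x,i^s)$ denotes $a(x,i\cdots i)$ with $s$ letters $i$, and $a(x,i^0)=e_x$. For $i\neq j$ let $\kappa=1-a_{ij}$ and $\omega_{ij}(x)=\sum_{t=0}^{\kappa}(-1)^t\begin{bmatrix}\kappa\\ t\end{bmatrix}_q a(x,i^{\kappa-t}\,j\,i^t)$, $\omega_{ij}(x)^*=\sum_{t=0}^{\kappa}(-1)^t\begin{bmatrix}\kappa\\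 t\end{bmatrix}_q a(x,i^{\kappa-t}\,j\,i^t)^*$. $\mathfrak{u}_q^{\mathcal{C}}$: the quotient of $k\overline{\mathcal{Q}}$ by the ideal generated by, for all $x\in\mathbb{Z}_n^t$ and $i\ne j$: $a(x,i)a(x,i)^*-a(x+c^i,i)^*a(x+c^i,i)-\frac{q^{x_i}-q^{-x_i}}{q-q^{-1}}e_x$ (also for all $i$), $a(x,j)^*a(x,i)-a(x-c^j,i)a(x-c^i,j)^*$, $a(x,i^\ell)$, $a(x,i^\ell)^*$, $\omega_{ij}(x)$, $\omega_{ij}(x)^*$. It is a Hopf algebra with $\Delta(e_x)=\sum_{u+v=x}e_u\otimes e_v$, $\Delta(a(x,i))=\sum_{u+v=x}q^{u_i}e_u\otimes a(v,i)+\sum_{u+v=x}a(u,i)\otimes e_v$, $\Delta(a(x,i)^* )=\sum_{u+v=x}e_u\otimes a(v,i)^*+\sum_{u+v=x}q^{-v_i}a(u,i)^*\otimes e_v$, $\varepsilon(e_0)=1$, $\varepsilon(e_x)=0$ for $x\ne0$, $\varepsilon(a(x,i))=\varepsilon(a(x,i)^* )=0$, $S(e_x)=e_{-x}$, $S(a(x,i))=-q^{x_i-2}a(-x+c^i,i)$, $S(a(x,i)^* )=-q^{-x_i+2}a(-x+c^i,i)^*$. *)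

From HB Require Import structures.
From mathcomp Require Import all_boot all_order all_algebra.
Set Implicit Arguments. Unset Strict Implicit. Unset Printing Implicit Defensive.
Import Order.TTheory GRing.Theory Num.Theory.
Local Open Scope ring_scope.

Section QG.
Variable k : fieldType.

Definition alg_hom (A B : algType k) (f : A -> B) :=
  [/\ forall (c : k) x y, f (c *: x + y) = c *: f x + f y,
      f 1 = 1 & forall x y, f (x * y) = f x * f y].

Definition alg_char (A : algType k) (f : A -> k) :=
  [/\ forall (c : k) x y, f (c *: x + y) = c * f x + f y,
      f 1 = 1 & forall x y, f (x * y) = f x * f y].

Definition alg_antihom (A : algType k) (f : A -> A) :=
  [/\ forall (c : k) x y, f (c *: x + y) = c *: f x + f y,
      f 1 = 1 & forall x y, f (x * y) = f y * f x].

(* (T, i1, i2) is the tensor product algebra A (x) A, with i1 a = a (x) 1 and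
   i2 a = 1 (x) a, characterised by its universal property: algebra maps out of
   A (x) A correspond to pairs of algebra maps out of A with commuting images. *)
Definition is_tensor_square (A T : algType k) (i1 i2 : A -> T) :=
  [/\ alg_hom i1, alg_hom i2, (forall a b, i1 a * i2 b = i2 b * i1 a),
      (forall (B : algType k) (f g : A -> B), alg_hom f -> alg_hom g ->
         (forall a b, f a * g b = g b * f a) ->
         exists2 phi : T -> B, alg_hom phi &
           forall a, phi (i1 a) = f a /\ phi (i2 a) = g a) &
      (forall (B : algType k) (phi psi : T -> B), alg_hom phi -> alg_hom psi ->
         (forall a, phi (i1 a) = psi (i1 a) /\ phi (i2 a) = psi (i2 a)) ->
         forall x, phi x = psi x)].

Definition qint (q : k) (m : nat) : k := (q ^+ m - q ^- m) / (q - q^-1).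
Definition qfact (q : k) (m : nat) : k := \prod_(1 <= s < m.+1) qint q s.
Definition qbinom (q : k) (m s : nat) : k :=
  qfact q m / (qfact q s * qfact q (m - s)).

(* Cartan matrix of a finite-dimensional semisimple simply laced Lie algebra:
   a symmetric generalized Cartan matrix with off-diagonal entries in {0,-1}
   that is positive definite (i.e. of finite type, types ADE). *)
Definition simply_laced_cartan (t : nat) (C : 'M[int]_t) :=
  (forall i, C i i = 2) /\ (forall i j, i != j -> C i j = 0 \/ C i j = -1) /\ (C^T = C) /\ (forall v : 'rV[rat]_t, v != 0 ->
        0 < (v *m map_mx (fun z : int => z%:~R : rat) C *m v^T) 0 0).

Definition ell (n : nat) : nat := if odd n then n else n./2.

(* Z_n^t, as row vectors over 'Z_n (n >= 5 in the theorem, so 'Z_n = Z/nZ) *)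
Definition vert (n t : nat) := 'rV['Z_n]_t.

Definition ccol (n t : nat) (C : 'M[int]_t) (i : 'I_t) : vert n t :=
  \row_j ((C j i)%:~R : 'Z_n).

Definition dotZ (n t : nat) (x y : vert n t) : 'Z_n := \sum_i x 0 i * y 0 i.

Definition qpow (q : k) (n : nat) (m : 'Z_n) : k := q ^+ (m : nat).

Definition qintZ (q : k) (n : nat) (m : 'Z_n) : k :=
  (qpow q m - qpow q (- m)) / (q - q^-1).

Section Uq.
Variables (q : k) (n t : nat) (C : 'M[int]_t) (B : algType k).

Definition serre (X : 'I_t -> B) (i j : 'I_t) : B :=
  let kappa := `|1 - C i j|%N in
  \sum_(0 <= s < kappa.+1)
     ((-1) ^+ s * qbinom q kappa s) *: (X i ^+ (kappa - s) * X j * X i ^+ s).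

(* K_i^{-1} = K_i^{n-1} since K_i^n = 1 *)
Definition uq_rels (K E F : 'I_t -> B) :=
  (forall i, K i ^+ n = 1) /\
  (forall i j, K i * K j = K j * K i) /\
  (forall i j, K i * E j * K i ^+ n.-1 = (q ^ (C i j)) *: E j) /\
  (forall i j, K i * F j * K i ^+ n.-1 = (q ^ (- C i j)) *: F j) /\
  (forall i j, E i * F j - F j * E i =
         if i == j then (q - q^-1)^-1 *: (K i - K i ^+ n.-1) else 0) /\
  (forall i, E i ^+ ell n = 0 /\ F i ^+ ell n = 0) /\
  (forall i j, i != j -> serre E i j = 0 /\ serre F i j = 0).

Definition Kpow (K : 'I_t -> B) (y : vert n t) : B :=
  \prod_(i < t) K i ^+ (y 0 i : nat).

Definition epsx (K : 'I_t -> B) (x : vert n t) : B :=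
  ((n ^ t)%:R : k)^-1 *: \sum_(y : vert n t) qpow q (- dotZ x y) *: Kpow K y.
End Uq.

(* (U, K, E, F) is the algebra u_q(C) : generated by K, E, F subject to uq_rels,
   and universal for this property. *)
Definition is_uq (q : k) (n t : nat) (C : 'M[int]_t) (U : algType k)
  (K E F : 'I_t -> U) :=
  uq_rels q n C K E F /\
  forall (B : algType k) (K' E' F' : 'I_t -> B), uq_rels q n C K' E' F' ->
    (exists2 phi : U -> B, alg_hom phi &
        forall i, [/\ phi (K i) = K' i, phi (E i) = E' i & phi (F i) = F' i]) /\
    (forall phi psi : U -> B, alg_hom phi -> alg_hom psi ->
        (forall i, [/\ phi (K i) = psi (K i), phi (E i) = psi (E i)
                     & phi (F i) = psi (F i)]) ->
        forall u, phi u = psi u).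

Section UqC.
Variables (q : k) (n t : nat) (C : 'M[int]_t) (B : algType k).
Variables (e : vert n t -> B) (a as_ : vert n t -> 'I_t -> B).
Local Notation c := (ccol n C).

Fixpoint pathA (x : vert n t) (w : seq 'I_t) : B :=
  if w is i :: w' then a x i * pathA (x - c i) w' else e x.
Fixpoint pathS (x : vert n t) (w : seq 'I_t) : B :=
  if w is i :: w' then pathS (x - c i) w' * as_ x i else e x.

Definition omega (P : vert n t -> seq 'I_t -> B) (x : vert n t) (i j : 'I_t) : B :=
  let kappa := `|1 - C i j|%N in
  \sum_(0 <= s < kappa.+1)
    ((-1) ^+ s * qbinom q kappa s) *: P x (nseq (kappa - s) i ++ j :: nseq s i).

Definition uqC_rels :=
  (* path algebra of the finite double quiver: vertices = orthogonal
     idempotents summing to 1, arrows a(x,i) : x - c^i -> x and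
     a(x,i)^* : x -> x - c^i, paths composed right to left *)
  (forall x y, e x * e y = if x == y then e x else 0) /\
  (\sum_(x : vert n t) e x = 1) /\
  (forall x i, [/\ e x * a x i = a x i, a x i * e (x - c i) = a x i,
                  e (x - c i) * as_ x i = as_ x i & as_ x i * e x = as_ x i]) /\
  (forall x i, a x i * as_ x i - as_ (x + c i) i * a (x + c i) i
                 = qintZ q (x 0 i) *: e x) /\
  (forall x i j, i != j -> as_ x j * a x i = a (x - c j) i * as_ (x - c i) j) /\
  (forall x i, pathA x (nseq (ell n) i) = 0 /\ pathS x (nseq (ell n) i) = 0) /\
  (forall x i j, i != j -> omega pathA x i j = 0 /\ omega pathS x i j = 0).
End UqC.

Definition is_uqC (q : k) (n t : nat) (C : 'M[int]_t) (V : algType k)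
  (e : vert n t -> V) (a as_ : vert n t -> 'I_t -> V) :=
  uqC_rels q C e a as_ /\
  forall (B : algType k) (e' : vert n t -> B) (a' as' : vert n t -> 'I_t -> B),
    uqC_rels q C e' a' as' ->
    (exists2 phi : V -> B, alg_hom phi &
        (forall x, phi (e x) = e' x) /\
        (forall x i, phi (a x i) = a' x i /\ phi (as_ x i) = as' x i)) /\
    (forall phi psi : V -> B, alg_hom phi -> alg_hom psi ->
        (forall x, phi (e x) = psi (e x)) ->
        (forall x i, phi (a x i) = psi (a x i) /\ phi (as_ x i) = psi (as_ x i)) ->
        forall v, phi v = psi v).

Definition uq_hopf (n t : nat) (U TU : algType k) (K E F : 'I_t -> U)
  (i1 i2 : U -> TU) (D : U -> TU) (eps : U -> k) (S : U -> U) :=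
  alg_hom D /\ alg_char eps /\ alg_antihom S /\
  (forall i, [/\ D (K i) = i1 (K i) * i2 (K i),
                 D (E i) = i1 (E i) + i1 (K i) * i2 (E i) &
                 D (F i) = i1 (F i) * i2 (K i ^+ n.-1) + i2 (F i)]) /\
  (forall i, [/\ eps (K i) = 1, eps (E i) = 0 & eps (F i) = 0]) /\
  (forall i, [/\ S (K i) = K i ^+ n.-1, S (E i) = - (K i ^+ n.-1 * E i)
                & S (F i) = - (F i * K i)]).

Definition uqC_hopf (q : k) (n t : nat) (C : 'M[int]_t) (V TV : algType k)
  (e : vert n t -> V) (a as_ : vert n t -> 'I_t -> V)
  (i1 i2 : V -> TV) (D : V -> TV) (eps : V -> k) (S : V -> V) :=
  alg_hom D /\ alg_char eps /\ alg_antihom S /\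
  (forall x, D (e x) = \sum_(u : vert n t) i1 (e u) * i2 (e (x - u))) /\
  (forall x i, D (a x i) =
      \sum_(u : vert n t) qpow q (u 0 i) *: (i1 (e u) * i2 (a (x - u) i))
    + \sum_(u : vert n t) i1 (a u i) * i2 (e (x - u))) /\
  (forall x i, D (as_ x i) =
      \sum_(u : vert n t) i1 (e u) * i2 (as_ (x - u) i)
    + \sum_(u : vert n t) qpow q (- (x - u) 0 i) *: (i1 (as_ u i) * i2 (e (x - u)))) /\
  (forall x i, [/\ eps (e x) = (if x == 0 then 1 else 0),
                   eps (a x i) = 0 & eps (as_ x i) = 0]) /\
  (forall x i, [/\ S (e x) = e (- x),
      S (a x i) = - (qpow q (x 0 i - 2%:R) *: a (- x + ccol n C i) i) &
      S (as_ x i) = - (qpow q (- x 0 i + 2%:R) *: as_ (- x + ccol n C i) i)]).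

End QG.

From HB Require Import structures.
From mathcomp Require Import all_boot all_order all_algebra zify.
Import Order.TTheory GRing.Theory Num.Theory.
Local Open Scope ring_scope.
Set Implicit Arguments. Unset Strict Implicit. Unset Printing Implicit Defensive.

(* The elements eps_x = n^-t sum_y q^(-x.y) K_y are the primitive idempotents of the
   group algebra of the torus <K_1, ..., K_t> ~ Z_n^t: since q is a primitive n-th root
   of unity the characters y |-> q^(x.y) of Z_n^t are orthogonal, so the eps_x are
   orthogonal idempotents summing to 1 with K_y eps_x = q^(x.y) eps_x, and
   K_y = sum_x q^(x.y) eps_x.  Commuting K_y past E_i and F_i then gives
   eps_x E_i = E_i eps_(x - c^i) and eps_x F_i = F_i eps_(x + c^i).  Hence eps_x,
   eps_x E_i and F_i eps_x satisfy the defining relations of u_q^C, which yields tau;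
   conversely K_i |-> sum_x q^(x_i) e_x, E_i |-> sum_x a(x,i), F_i |-> sum_x a(x,i)^*
   satisfy those of u_q(C) and yield its inverse.  All maps involved are algebra maps
   (antipodes into the converse algebra), so compatibility with coproduct, counit and
   antipode need only be checked on the generators e_x, a(x,i), a(x,i)^*, where it is
   again a Fourier computation with the eps_x. *)

Section AlgHomTheory.
Variables (k : fieldType) (A B : algType k) (f : A -> B).
Hypothesis f_hom : alg_hom f.

Lemma alg_homD x y : f (x + y) = f x + f y.
Proof. by have [H _ _] := f_hom; have := H 1 x y; rewrite !scale1r. Qed.

Lemma alg_hom0 : f 0 = 0.
Proof. by apply: (addrI (f 0)); rewrite -alg_homD !addr0. Qed.

Lemma alg_homZ c x : f (c *: x) = c *: f x.
Proof. by have [H _ _] := f_hom; rewrite -[c *: x]addr0 H alg_hom0 addr0. Qed.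

Lemma alg_homN x : f (- x) = - f x.
Proof. by rewrite -scaleN1r alg_homZ scaleN1r. Qed.

Lemma alg_homB x y : f (x - y) = f x - f y.
Proof. by rewrite alg_homD alg_homN. Qed.

Lemma alg_hom_sum I (r : seq I) (P : pred I) (F : I -> A) :
  f (\sum_(i <- r | P i) F i) = \sum_(i <- r | P i) f (F i).
Proof. exact: (big_morph _ alg_homD alg_hom0). Qed.

Lemma alg_hom1 : f 1 = 1.
Proof. by have [] := f_hom. Qed.

Lemma alg_homM x y : f (x * y) = f x * f y.
Proof. by have [] := f_hom. Qed.

Lemma alg_homX x p : f (x ^+ p) = f x ^+ p.
Proof. by elim: p => [|p IH]; rewrite ?alg_hom1 // !exprS alg_homM IH. Qed.

Lemma alg_hom_prod I (r : seq I) (P : pred I) (F : I -> A) :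
  f (\prod_(i <- r | P i) F i) = \prod_(i <- r | P i) f (F i).
Proof. exact: (big_morph _ alg_homM alg_hom1). Qed.

End AlgHomTheory.

Lemma alg_hom_id (k : fieldType) (A : algType k) : alg_hom (@id A).
Proof. by []. Qed.

Lemma alg_hom_comp (k : fieldType) (A B D : algType k) (f : A -> B) (g : B -> D) :
  alg_hom f -> alg_hom g -> alg_hom (g \o f).
Proof.
move=> f_hom g_hom; split=> [c x y|//=|x y] /=.
- by rewrite (alg_homD f_hom) (alg_homZ f_hom) (alg_homD g_hom) (alg_homZ g_hom).
- by rewrite (alg_hom1 f_hom) (alg_hom1 g_hom).
- by rewrite (alg_homM f_hom) (alg_homM g_hom).
Qed.

Lemma alg_char_hom (k : fieldType) (A : algType k) (f : A -> k) :
  alg_char f -> alg_hom (f : A -> k^o).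
Proof. by case. Qed.

Definition conv_alg (k : fieldType) (A : algType k) : Type := A^c.

Section ConverseAlgebra.
Variables (k : fieldType) (A : algType k).

HB.instance Definition _ := GRing.NzRing.on (conv_alg A).
HB.instance Definition _ := GRing.Lmodule.copy (conv_alg A) A.

Lemma conv_alg_scalerAl (c : k) (u v : conv_alg A) :
  c *: (u * v) = ((c *: u : conv_alg A) * v : conv_alg A).
Proof. exact: (@scalerAr k A c v u). Qed.
HB.instance Definition _ := GRing.Lmodule_isLalgebra.Build k (conv_alg A) conv_alg_scalerAl.

Lemma conv_alg_scalerAr (c : k) (u v : conv_alg A) :
  c *: (u * v) = (u * (c *: v : conv_alg A) : conv_alg A).
Proof. exact: (@scalerAl k A c v u). Qed.
HB.instance Definition _ := GRing.Lalgebra_isAlgebra.Build k (conv_alg A) conv_alg_scalerAr.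

End ConverseAlgebra.

Lemma alg_antihom_conv (k : fieldType) (A : algType k) (f : A -> A) :
  alg_antihom f -> alg_hom (f : A -> conv_alg A).
Proof. by case. Qed.

Lemma alg_hom_conv (k : fieldType) (A B : algType k) (f : A -> B) :
  alg_hom f -> alg_hom (f : conv_alg A -> conv_alg B).
Proof. by move=> [f_lin f1 fM]; split=> // x y; exact: fM. Qed.

Section AntiHomTheory.
Variables (k : fieldType) (A : algType k) (S : A -> A).
Hypothesis S_anti : alg_antihom S.
Let S_hom : alg_hom (S : A -> conv_alg A) := alg_antihom_conv S_anti.

Lemma alg_antihomZ c x : S (c *: x) = c *: S x.
Proof. exact: (alg_homZ S_hom). Qed.

Lemma alg_antihom_sum I (r : seq I) (P : pred I) (F : I -> A) :
  S (\sum_(i <- r | P i) F i) = \sum_(i <- r | P i) S (F i).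
Proof. exact: (alg_hom_sum S_hom). Qed.

Lemma alg_antihomM x y : S (x * y) = S y * S x.
Proof. by have [] := S_anti. Qed.

Lemma alg_antihomX x p : S (x ^+ p) = S x ^+ p.
Proof.
elim: p => [|p IH]; first by rewrite !expr0 (alg_hom1 S_hom).
by rewrite exprS alg_antihomM IH exprSr.
Qed.

Lemma alg_antihom_prod_comm I (r : seq I) (X : I -> A) :
  (forall i j, S (X i) * S (X j) = S (X j) * S (X i)) ->
  S (\prod_(i <- r) X i) = \prod_(i <- r) S (X i).
Proof.
move=> SX_comm; elim: r => [|h r IH]; first by rewrite !big_nil (alg_hom1 S_hom).
rewrite !big_cons alg_antihomM IH; apply/esym/commr_prod => j _; exact: SX_comm.
Qed.

End AntiHomTheory.

Section TensorSquare.
Variables (k : fieldType) (A T : algType k) (i1 i2 : A -> T).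
Hypothesis T_tensor : is_tensor_square i1 i2.

Definition tens (x y : A) : T := i1 x * i2 y.

Let i1_hom : alg_hom i1. Proof. by case: T_tensor. Qed.
Let i2_hom : alg_hom i2. Proof. by case: T_tensor. Qed.

Lemma tensM x y z w : tens x y * tens z w = tens (x * z) (y * w).
Proof.
have [_ _ i12C _ _] := T_tensor.
by rewrite /tens mulrA -(mulrA (i1 x)) -i12C mulrA -(alg_homM i1_hom) -mulrA
  -(alg_homM i2_hom).
Qed.

Lemma tens1 : tens 1 1 = 1.
Proof. by rewrite /tens (alg_hom1 i1_hom) (alg_hom1 i2_hom) mulr1. Qed.

Lemma i1_tens x : i1 x = tens x 1.
Proof. by rewrite /tens (alg_hom1 i2_hom) mulr1. Qed.

Lemma i2_tens x : i2 x = tens 1 x.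
Proof. by rewrite /tens (alg_hom1 i1_hom) mul1r. Qed.

Lemma tensZl c x y : tens (c *: x) y = c *: tens x y.
Proof. by rewrite /tens (alg_homZ i1_hom) scalerAl. Qed.

Lemma tensZr c x y : tens x (c *: y) = c *: tens x y.
Proof. by rewrite /tens (alg_homZ i2_hom) scalerAr. Qed.

Lemma tens_suml I (r : seq I) (F : I -> A) y :
  tens (\sum_(i <- r) F i) y = \sum_(i <- r) tens (F i) y.
Proof. by rewrite /tens (alg_hom_sum i1_hom) mulr_suml. Qed.

Lemma tens_sumr I (r : seq I) (F : I -> A) x :
  tens x (\sum_(i <- r) F i) = \sum_(i <- r) tens x (F i).
Proof. by rewrite /tens (alg_hom_sum i2_hom) mulr_sumr. Qed.

Lemma tens_prod I (r : seq I) (F G : I -> A) :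
  \prod_(i <- r) tens (F i) (G i) = tens (\prod_(i <- r) F i) (\prod_(i <- r) G i).
Proof.
elim: r => [|h r IH]; first by rewrite !big_nil tens1.
by rewrite !big_cons IH tensM.
Qed.

Lemma tensX x y p : tens x y ^+ p = tens (x ^+ p) (y ^+ p).
Proof.
elim: p => [|p IH]; first by rewrite !expr0 tens1.
by rewrite !exprS IH tensM.
Qed.

End TensorSquare.

Section DotProduct.
Variables (n t : nat).
Local Notation vt := (vert n t).

Lemma dotZC (x y : vt) : dotZ x y = dotZ y x.
Proof. by apply: eq_bigr => i _; rewrite mulrC. Qed.

Lemma dotZDl (x y z : vt) : dotZ (x + y) z = dotZ x z + dotZ y z.
Proof. by rewrite /dotZ -big_split; apply: eq_bigr => i _; rewrite mxE mulrDl. Qed.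

Lemma dotZDr (x y z : vt) : dotZ z (x + y) = dotZ z x + dotZ z y.
Proof. by rewrite !(dotZC z) dotZDl. Qed.

Lemma dotZNl (x y : vt) : dotZ (- x) y = - dotZ x y.
Proof. by rewrite /dotZ -sumrN; apply: eq_bigr => i _; rewrite mxE mulNr. Qed.

Lemma dotZNr (x y : vt) : dotZ y (- x) = - dotZ y x.
Proof. by rewrite !(dotZC y) dotZNl. Qed.

Lemma dotZBl (x y z : vt) : dotZ (x - y) z = dotZ x z - dotZ y z.
Proof. by rewrite dotZDl dotZNl. Qed.

Lemma dotZ0l (y : vt) : dotZ 0 y = 0.
Proof. by rewrite /dotZ big1 // => i _; rewrite mxE mul0r. Qed.

Definition unitv (i : 'I_t) : vt := delta_mx 0 i.

Lemma dotZ_unitv (x : vt) i : dotZ x (unitv i) = x 0 i.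
Proof.
rewrite /dotZ (bigD1 i) //= big1 => [|j /negbTE ji]; rewrite /unitv mxE eqxx /=.
  by rewrite eqxx mulr1 addr0.
by rewrite ji mulr0.
Qed.

Lemma dotZ_ccol (C : 'M[int]_t) (y : vt) j :
  dotZ y (ccol n C j) = \sum_i y 0 i * (C i j)%:~R.
Proof. by apply: eq_bigr => i _; rewrite mxE. Qed.

End DotProduct.

Section RootOfUnityPowers.
Variables (k : fieldType) (m : nat) (q : k).
Hypothesis q_prim : (m.+2).-primitive_root q.
Local Notation N := m.+2.

Lemma qpowD (a b : 'Z_N) : qpow q (a + b) = qpow q a * qpow q b.
Proof. by rewrite /qpow -exprD -(prim_expr_mod q_prim (a + b)%N). Qed.

Lemma qpow0 : qpow q (0 : 'Z_N) = 1.
Proof. by rewrite /qpow expr0. Qed.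

Lemma qpow_sum I (r : seq I) (P : pred I) (F : I -> 'Z_N) :
  qpow q (\sum_(i <- r | P i) F i) = \prod_(i <- r | P i) qpow q (F i).
Proof. exact: (big_morph _ qpowD qpow0). Qed.

Lemma qpow_neq0 (a : 'Z_N) : qpow q a != 0.
Proof.
apply: expf_neq0; apply/eqP => q0.
by have /eqP := prim_expr_order q_prim; rewrite q0 expr0n eq_sym oner_eq0.
Qed.

Lemma qpowN (a : 'Z_N) : qpow q (- a) = (qpow q a)^-1.
Proof.
by apply: (mulIf (qpow_neq0 a)); rewrite -qpowD addNr qpow0 mulVf ?qpow_neq0.
Qed.

Lemma qpowMn (a : 'Z_N) p : qpow q (a *+ p) = qpow q a ^+ p.
Proof. by elim: p => [|p IH]; rewrite ?qpow0 // mulrS qpowD IH exprS. Qed.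

Lemma qpowM (a b : 'Z_N) : qpow q (a * b) = qpow q a ^+ b.
Proof. by rewrite -qpowMn -mulr_natr natr_Zp. Qed.

Lemma qpow_intr (z : int) : qpow q (z%:~R : 'Z_N) = q ^ z.
Proof.
have qpow1 : qpow q (1 : 'Z_N) = q by rewrite /qpow expr1.
case: z => p; first by rewrite -pmulrn qpowMn qpow1.
by rewrite NegzE rmorphN /= -pmulrn qpowN qpowMn qpow1 exprnN.
Qed.

Lemma qpow_exp_order (a : 'Z_N) : qpow q a ^+ N = 1.
Proof. by rewrite /qpow exprAC (prim_expr_order q_prim) expr1n. Qed.

Lemma qpow_exp_predn (a : 'Z_N) : qpow q a ^+ N.-1 = qpow q (- a).
Proof.
rewrite qpowN; apply: (mulIf (qpow_neq0 a)); rewrite mulVf ?qpow_neq0 //.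
by rewrite -exprSr qpow_exp_order.
Qed.

Lemma qpow_eq1 (a : 'Z_N) : qpow q a = 1 -> a = 0.
Proof.
move/eqP; rewrite /qpow -(expr0 q) (eq_prim_root_expr q_prim) mod0n modn_small //.
by move=> /eqP a0; apply/val_inj.
Qed.

Variable t : nat.
Local Notation vt := (vert N t).

Lemma natr_card_vert_neq0 : ((N ^ t)%:R : k) != 0.
Proof. by rewrite natrX expf_neq0 // (prim_root_natf_neq0 q_prim). Qed.

Lemma inv_card_vert : ((N ^ t)%:R : k)^-1 * (N ^ t)%:R = 1.
Proof. by rewrite mulVf // natr_card_vert_neq0. Qed.

Lemma sum_qpow_dotZ (x : vt) :
  \sum_(y : vt) qpow q (dotZ x y) = if x == 0 then (N ^ t)%:R else 0.
Proof.
have [->|x_neq0] := eqVneq x 0.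
  under eq_bigr do rewrite dotZ0l qpow0.
  by rewrite sumr_const card_mx card_ord mul1n.
have [i xi_neq0] : exists i, x 0 i != 0.
  apply/existsP; apply: contraNT x_neq0; rewrite negb_exists => /forallP x0.
  by apply/eqP/rowP => i; rewrite mxE; apply/eqP/negPn/x0.
(* Translating the summation variable by the i-th unit vector multiplies the sum by q^(x_i) <> 1. *)
set S := (X in X = _).
have S_shift : S = qpow q (x 0 i) * S.
  rewrite /S {1}(reindex_inj (addIr (unitv N i))) /= mulr_sumr.
  by apply: eq_bigr => y _; rewrite dotZDr qpowD dotZ_unitv mulrC.
have /eqP : (1 - qpow q (x 0 i)) * S = 0 by rewrite mulrBl mul1r -S_shift subrr.
rewrite mulf_eq0 subr_eq0 => /orP[/eqP/esym/qpow_eq1|/eqP //].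
by move/eqP: xi_neq0.
Qed.

Lemma qpow_dotZ_orthogonal (x z : vt) :
  \sum_(y : vt) qpow q (- dotZ x y) * qpow q (dotZ z y)
   = if z == x then (N ^ t)%:R else 0.
Proof.
rewrite -subr_eq0 -sum_qpow_dotZ; apply: eq_bigr => y _.
by rewrite -qpowD dotZBl addrC.
Qed.

End RootOfUnityPowers.

Lemma sum_if_eq (V : zmodType) (I : finType) (i : I) (F : I -> V) :
  \sum_j (if j == i then F j else 0) = F i.
Proof. by rewrite -big_mkcond big_pred1_eq. Qed.

Section OrthogonalIdempotents.
Variables (k : fieldType) (I : finType) (W : algType k) (e : I -> W).
Hypothesis e_orth : forall x y, e x * e y = if x == y then e x else 0.
Hypothesis e_sum : \sum_x e x = 1.

Definition diag (f : I -> k) : W := \sum_x f x *: e x.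

Lemma e_idem x : e x * e x = e x.
Proof. by rewrite e_orth eqxx. Qed.

Lemma diag_e f y : diag f * e y = f y *: e y.
Proof.
rewrite /diag mulr_suml -[RHS](sum_if_eq y (fun z => f z *: e y)).
apply: eq_bigr => x _; rewrite -scalerAl e_orth.
by case: eqP => [->|_]; rewrite ?scaler0.
Qed.

Lemma e_diag f y : e y * diag f = f y *: e y.
Proof.
rewrite /diag mulr_sumr -[RHS](sum_if_eq y (fun z => f z *: e y)).
apply: eq_bigr => x _; rewrite -scalerAr e_orth eq_sym.
by case: eqP => [->|_]; rewrite ?scaler0.
Qed.

Lemma diag1 : diag (fun _ => 1) = 1.
Proof. by rewrite /diag -e_sum; apply: eq_bigr => x _; rewrite scale1r. Qed.

Lemma diag_mul f g : diag f * diag g = diag (fun x => f x * g x).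
Proof.
rewrite {2}/diag mulr_sumr; apply: eq_bigr => x _.
by rewrite -scalerAr diag_e scalerA mulrC.
Qed.

Lemma diag_prod J (r : seq J) (f : J -> I -> k) :
  \prod_(j <- r) diag (f j) = diag (fun x => \prod_(j <- r) f j x).
Proof.
elim: r => [|h r IH]; first by rewrite big_nil -diag1; apply: eq_bigr => x _; rewrite big_nil.
by rewrite big_cons IH diag_mul; apply: eq_bigr => x _; rewrite big_cons.
Qed.

Lemma diagX f p : diag f ^+ p = diag (fun x => f x ^+ p).
Proof.
elim: p => [|p IH]; first by rewrite expr0 -diag1; apply: eq_bigr => x _; rewrite expr0.
by rewrite exprS IH diag_mul; apply: eq_bigr => x _; rewrite exprS.
Qed.

Lemma diagZ b f : b *: diag f = diag (fun x => b * f x).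
Proof. by rewrite /diag scaler_sumr; apply: eq_bigr => x _; rewrite scalerA. Qed.

Lemma diagB f g : diag f - diag g = diag (fun x => f x - g x).
Proof. by rewrite /diag -sumrB; apply: eq_bigr => x _; rewrite scalerBl. Qed.

Lemma diag_sum J (r : seq J) (f : J -> I -> k) :
  \sum_(j <- r) diag (f j) = diag (fun x => \sum_(j <- r) f j x).
Proof. by rewrite /diag exchange_big; apply: eq_bigr => x _; rewrite scaler_suml. Qed.

End OrthogonalIdempotents.

Section TwistedCommutation.
Variables (k : fieldType) (A : algType k).

Lemma expr_twist (a X : A) (c : k) p :
  a * X = c *: (X * a) -> a ^+ p * X = c ^+ p *: (X * a ^+ p).
Proof.
move=> aX; elim: p => [|p IH]; first by rewrite !expr0 mul1r mulr1 scale1r.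
rewrite {1}exprSr -mulrA aX -scalerAr mulrA IH -scalerAl scalerA -mulrA.
by rewrite -exprSr -exprS.
Qed.

Lemma prod_twist I (r : seq I) (a : I -> A) (c : I -> k) (X : A) :
  (forall i, a i * X = c i *: (X * a i)) ->
  \prod_(i <- r) a i * X = (\prod_(i <- r) c i) *: (X * \prod_(i <- r) a i).
Proof.
move=> aX; elim: r => [|h r IH]; first by rewrite !big_nil mul1r mulr1 scale1r.
rewrite !big_cons -mulrA IH -scalerAr (mulrA (a h)) aX -scalerAl scalerA mulrA.
by rewrite [c h * _]mulrC.
Qed.

End TwistedCommutation.

Section SerreWords.
Variables (k : fieldType) (A : algType k).

Lemma prod_nseq I (X : I -> A) l i : \prod_(j <- nseq l i) X j = X i ^+ l.
Proof. by elim: l => [|l IH]; rewrite ?big_nil ?expr0 // big_cons IH exprS. Qed.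

Lemma prod_serre_word I (X : I -> A) p s i j :
  \prod_(l <- nseq p i ++ j :: nseq s i) X l = X i ^+ p * X j * X i ^+ s.
Proof. by rewrite big_cat big_cons /= !prod_nseq mulrA. Qed.

Lemma prod_rev_serre_word I (X : I -> A) p s i j :
  \prod_(l <- rev (nseq p i ++ j :: nseq s i)) X l = X i ^+ s * X j * X i ^+ p.
Proof.
rewrite rev_cat rev_cons !rev_nseq -cats1 -catA big_cat /= big_cons /=.
by rewrite !prod_nseq mulrA.
Qed.

Lemma qbinom_sym (q : k) l s : (s <= l)%N -> qbinom q l (l - s) = qbinom q l s.
Proof. by move=> sl; rewrite /qbinom subKn // [qfact q (l - s) * _]mulrC. Qed.

Lemma serre_sum_rev (q : k) l (x y : A) :
  \sum_(0 <= s < l.+1) ((-1) ^+ s * qbinom q l s) *: (x ^+ s * y * x ^+ (l - s))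
  = (-1) ^+ l *:
    \sum_(0 <= s < l.+1) ((-1) ^+ s * qbinom q l s) *: (x ^+ (l - s) * y * x ^+ s).
Proof.
rewrite big_nat_rev /= add0n scaler_sumr; apply: eq_big_nat => s /andP[_].
rewrite ltnS => sl; rewrite subSS subKn // scalerA qbinom_sym //; congr (_ *: _).
rewrite mulrA; congr (_ * _).
by rewrite -{2}(subnK sl) exprD -mulrA -exprMn mulrNN mulr1 expr1n mulr1.
Qed.

End SerreWords.

Section EpsilonIdempotents.
Variables (k : fieldType) (m : nat) (q : k).
Hypothesis q_prim : (m.+2).-primitive_root q.
Local Notation N := m.+2.
Variables (t : nat) (C : 'M[int]_t) (U : algType k) (K E F : 'I_t -> U).
Hypothesis U_rels : uq_rels q N C K E F.
Local Notation vt := (vert N t).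
Local Notation c := (ccol N C).
Local Notation eps := (@epsx _ q N t U K).
Local Notation Kp := (@Kpow _ N t U K).

Lemma K_exp_order i : K i ^+ N = 1.
Proof. by case: U_rels. Qed.

Lemma K_comm i j : K i * K j = K j * K i.
Proof. by case: U_rels => _ []. Qed.

Lemma K_E i j : K i * E j = q ^ (C i j) *: (E j * K i).
Proof.
have [_ [_ [KEK _]]] := U_rels; have := congr1 (fun z => z * K i) (KEK i j).
by rewrite -mulrA -exprSr prednK // K_exp_order mulr1 -scalerAl.
Qed.

Lemma K_F i j : K i * F j = q ^ (- C i j) *: (F j * K i).
Proof.
have [_ [_ [_ [KFK _]]]] := U_rels; have := congr1 (fun z => z * K i) (KFK i j).
by rewrite -mulrA -exprSr prednK // K_exp_order mulr1 -scalerAl.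
Qed.

Lemma E_F i j : E i * F j - F j * E i =
  if i == j then (q - q^-1)^-1 *: (K i - K i ^+ N.-1) else 0.
Proof. by have [_ [_ [_ [_ []]]]] := U_rels. Qed.

Lemma Kpow0 : Kp 0 = 1.
Proof. by rewrite /Kpow big1 // => i _; rewrite mxE expr0. Qed.

Lemma KpowD y z : Kp (y + z) = Kp y * Kp z.
Proof.
rewrite /Kpow -prodrM_comm; last by move=> i j _ _; apply/commrX/commr_sym/commrX/K_comm.
by apply: eq_bigr => i _; rewrite mxE /= (expr_mod _ (K_exp_order i)) exprD.
Qed.

Lemma Kpow_unitv i : Kp (unitv N i) = K i.
Proof.
rewrite /Kpow (eq_bigr (fun j => if j == i then K i else 1)) => [|j _].
  by rewrite -big_mkcond big_pred1_eq.
by rewrite mxE eqxx /=; case: eqP => [->|_]; rewrite ?expr1 ?expr0.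
Qed.

Lemma Kpow_E y j : Kp y * E j = qpow q (dotZ y (c j)) *: (E j * Kp y).
Proof.
rewrite /Kpow (@prod_twist _ _ _ _ _ (fun i => (q ^ (C i j)) ^+ (y 0 i : nat))).
  rewrite dotZ_ccol (qpow_sum q_prim); congr (_ *: _); apply: eq_bigr => i _.
  by rewrite mulrC (qpowM q_prim) (qpow_intr q_prim).
by move=> i; apply/expr_twist/K_E.
Qed.

Lemma Kpow_F y j : Kp y * F j = qpow q (- dotZ y (c j)) *: (F j * Kp y).
Proof.
rewrite /Kpow (@prod_twist _ _ _ _ _ (fun i => (q ^ (- C i j)) ^+ (y 0 i : nat))).
  rewrite dotZ_ccol -sumrN (qpow_sum q_prim); congr (_ *: _); apply: eq_bigr => i _.
  by rewrite -mulrN mulrC (qpowM q_prim) -rmorphN (qpow_intr q_prim).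
by move=> i; apply/expr_twist/K_F.
Qed.

Lemma Kpow_eps z x : Kp z * eps x = qpow q (dotZ x z) *: eps x.
Proof.
rewrite /epsx -scalerAr mulr_sumr scalerA mulrC -scalerA; congr (_ *: _).
rewrite [in RHS](reindex_inj (addrI z)) scaler_sumr; apply: eq_bigr => y _.
rewrite -scalerAr -KpowD scalerA -(qpowD q_prim); congr (qpow q _ *: _).
by rewrite dotZDr opprD addrA subrr add0r.
Qed.

Lemma eps_orth x y : eps x * eps y = if x == y then eps x else 0.
Proof.
rewrite {1}/epsx -scalerAl mulr_suml.
under eq_bigr do rewrite -scalerAl Kpow_eps scalerA.
rewrite -scaler_suml (qpow_dotZ_orthogonal q_prim) scalerA eq_sym.
by case: eqP => [->|_]; rewrite ?(inv_card_vert q_prim) ?scale1r // mulr0 scale0r.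
Qed.

Lemma Kpow_diag z : Kp z = diag eps (fun x => qpow q (dotZ x z)).
Proof.
have orth y : \sum_(x : vt) qpow q (dotZ x z) * qpow q (- dotZ x y)
              = if z == y then (N ^ t)%:R else 0.
  rewrite -(qpow_dotZ_orthogonal q_prim y z); apply: eq_bigr => x _.
  by rewrite mulrC !(dotZC x).
rewrite /diag; under eq_bigr do rewrite /epsx scalerA mulrC -scalerA scaler_sumr.
rewrite -scaler_sumr exchange_big /=.
under eq_bigr do under eq_bigr do rewrite scalerA.
under eq_bigr do rewrite -scaler_suml orth.
rewrite (bigD1 z) //= eqxx big1 ?addr0 => [|y /negbTE yz]; last first.
  by rewrite eq_sym yz scale0r.
by rewrite scalerA (inv_card_vert q_prim) scale1r.
Qed.

Lemma eps_sum : \sum_(x : vt) eps x = 1.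
Proof.
rewrite -Kpow0 Kpow_diag /diag; apply: eq_bigr => x _.
by rewrite dotZC dotZ0l qpow0 scale1r.
Qed.

Lemma K_diag i : K i = diag eps (fun x => qpow q (x 0 i)).
Proof.
by rewrite -Kpow_unitv Kpow_diag; apply: eq_bigr => x _; rewrite dotZ_unitv.
Qed.

Lemma K_exp_predn_diag i : K i ^+ N.-1 = diag eps (fun x => qpow q (- x 0 i)).
Proof.
rewrite K_diag (diagX eps_orth eps_sum); apply: eq_bigr => x _.
by rewrite (qpow_exp_predn q_prim).
Qed.

Lemma K_eps i x : K i * eps x = qpow q (x 0 i) *: eps x.
Proof. by rewrite K_diag (diag_e eps_orth). Qed.

Lemma eps_K x i : eps x * K i = qpow q (x 0 i) *: eps x.
Proof. by rewrite K_diag (e_diag eps_orth). Qed.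

Lemma K_exp_predn_eps i x : K i ^+ N.-1 * eps x = qpow q (- x 0 i) *: eps x.
Proof. by rewrite K_exp_predn_diag (diag_e eps_orth). Qed.

Lemma eps_E x j : eps x * E j = E j * eps (x - c j).
Proof.
rewrite /epsx -scalerAl -scalerAr mulr_suml mulr_sumr; congr (_ *: _).
apply: eq_bigr => y _; rewrite -scalerAl Kpow_E scalerA -scalerAr -(qpowD q_prim).
by congr (qpow q _ *: _); rewrite dotZBl opprB addrC (dotZC y).
Qed.

Lemma eps_F x j : eps x * F j = F j * eps (x + c j).
Proof.
rewrite /epsx -scalerAl -scalerAr mulr_suml mulr_sumr; congr (_ *: _).
apply: eq_bigr => y _; rewrite -scalerAl Kpow_F scalerA -scalerAr -(qpowD q_prim).
by congr (qpow q _ *: _); rewrite dotZDl opprD (dotZC y).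
Qed.

Local Notation eps_idem := (e_idem eps_orth).
Local Notation epsE := (fun x i => eps x * E i).
Local Notation Feps := (fun x i => F i * eps x).

Lemma pathA_eps x w : pathA C eps epsE x w = eps x * \prod_(j <- w) E j.
Proof.
elim: w x => [|i w IH] x /=; first by rewrite big_nil mulr1.
by rewrite IH big_cons mulrA -(mulrA (eps x)) -eps_E mulrA eps_idem mulrA.
Qed.

Lemma pathS_eps x w : pathS C eps Feps x w = \prod_(j <- rev w) F j * eps x.
Proof.
elim: w x => [|i w IH] x /=; first by rewrite big_nil mul1r.
rewrite IH rev_cons -cats1 big_cat /= big_cons big_nil mulr1.
by rewrite -mulrA (mulrA (eps _)) eps_F subrK -mulrA eps_idem mulrA.
Qed.

Lemma uqC_rels_eps : uqC_rels q C eps epsE Feps.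
Proof.
have [_ [_ [_ [_ [_ [nilp serre0]]]]]] := U_rels.
split; first exact: eps_orth.
split; first exact: eps_sum.
split.
  move=> x i /=; split.
  - by rewrite mulrA eps_idem.
  - by rewrite -mulrA -eps_E mulrA eps_idem.
  - by rewrite mulrA eps_F subrK -mulrA eps_idem.
  - by rewrite -mulrA eps_idem.
split.
  move=> x i /=.
  have -> : eps x * E i * (F i * eps x) = E i * F i * eps x.
    by rewrite eps_E -mulrA (mulrA (eps _)) eps_F subrK -mulrA eps_idem mulrA.
  have -> : F i * eps (x + c i) * (eps (x + c i) * E i) = F i * E i * eps x.
    by rewrite -mulrA (mulrA (eps _)) eps_idem eps_E addrK mulrA.
  rewrite -mulrBl E_F eqxx -scalerAl mulrBl K_exp_predn_eps K_eps -scalerBl scalerA.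
  by rewrite /qintZ mulrC.
split.
  move=> x i j ij /=.
  have -> : F j * eps x * (eps x * E i) = F j * E i * eps (x - c i).
    by rewrite -mulrA (mulrA (eps x)) eps_idem eps_E mulrA.
  have -> : eps (x - c j) * E i * (F j * eps (x - c i)) = E i * F j * eps (x - c i).
    by rewrite eps_E -mulrA (mulrA (eps _)) eps_F addrAC subrK -mulrA eps_idem mulrA.
  by have /eqP := E_F i j; rewrite (negbTE ij) subr_eq0 => /eqP ->.
split.
  move=> x i; rewrite pathA_eps pathS_eps rev_nseq !prod_nseq.
  by have [-> ->] := nilp i; rewrite mulr0 mul0r.
move=> x i j ij; have [serreE serreF] := serre0 i j ij; rewrite /omega; split.
  under eq_bigr do rewrite pathA_eps prod_serre_word scalerAr.
  by rewrite -mulr_sumr -[X in _ * X]/(serre q C E i j) serreE mulr0.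
under eq_bigr do rewrite pathS_eps prod_rev_serre_word scalerAl.
by rewrite -mulr_suml serre_sum_rev -[X in _ *: X]/(serre q C F i j) serreF scaler0 mul0r.
Qed.

End EpsilonIdempotents.

Section QuiverGenerators.
Variables (k : fieldType) (m : nat) (q : k).
Hypothesis q_prim : (m.+2).-primitive_root q.
Local Notation N := m.+2.
Variables (t : nat) (C : 'M[int]_t) (V : algType k).
Local Notation vt := (vert N t).
Local Notation c := (ccol N C).
Variables (e : vt -> V) (a as_ : vt -> 'I_t -> V).
Hypothesis V_rels : uqC_rels q C e a as_.

Lemma e_orth x y : e x * e y = if x == y then e x else 0.
Proof. by case: V_rels. Qed.

Lemma e_sum : \sum_(x : vt) e x = 1.
Proof. by case: V_rels => _ []. Qed.

Lemma e_a x i : e x * a x i = a x i.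
Proof. by have [_ [_ [/(_ x i)[]]]] := V_rels. Qed.

Lemma a_e x i : a x i * e (x - c i) = a x i.
Proof. by have [_ [_ [/(_ x i)[]]]] := V_rels. Qed.

Lemma e_as x i : e (x - c i) * as_ x i = as_ x i.
Proof. by have [_ [_ [/(_ x i)[]]]] := V_rels. Qed.

Lemma as_e x i : as_ x i * e x = as_ x i.
Proof. by have [_ [_ [/(_ x i)[]]]] := V_rels. Qed.

Lemma e_a_mul y x i (P : V) : e y * (a x i * P) = if y == x then a x i * P else 0.
Proof.
rewrite -{1}e_a !mulrA e_orth.
by have [->|_] := eqVneq y x; rewrite ?e_a ?mul0r.
Qed.

Lemma a_e_mul x i y (P : V) : a x i * (e y * P) = if y == x - c i then a x i * P else 0.
Proof.
rewrite -{1}a_e !mulrA -(mulrA (a x i)) e_orth eq_sym.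
by case: ifP; rewrite ?a_e ?mulr0 ?mul0r.
Qed.

Lemma e_as_mul y x i (P : V) : e y * (as_ x i * P) = if y == x - c i then as_ x i * P else 0.
Proof.
rewrite -{1}e_as !mulrA e_orth.
by have [->|_] := eqVneq y (x - c i); rewrite ?e_as ?mul0r.
Qed.

Lemma as_e_mul x i y (P : V) : as_ x i * (e y * P) = if y == x then as_ x i * P else 0.
Proof.
rewrite -{1}as_e !mulrA -(mulrA (as_ x i)) e_orth eq_sym.
by case: ifP; rewrite ?as_e ?mulr0 ?mul0r.
Qed.

Lemma e_trivial_vert : t = 0%N -> forall x : vt, x = 0 /\ e x = 1.
Proof.
move=> t0; have vt0 (y : vt) : y = 0.
  by apply/rowP => i; have := ltn_ord i; rewrite [in X in (_ < X)%N]t0.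
move=> x; split; first exact: vt0.
by rewrite -e_sum (big_pred1 x) // => y /=; rewrite (vt0 y) (vt0 x) eqxx.
Qed.

Local Notation diag := (diag e).

Lemma diag_a f x i : diag f * a x i = f x *: a x i.
Proof. by rewrite -e_a mulrA (diag_e e_orth) -scalerAl. Qed.

Lemma a_diag f x i : a x i * diag f = f (x - c i) *: a x i.
Proof. by rewrite -a_e -mulrA (e_diag e_orth) -scalerAr. Qed.

Lemma diag_as f x i : diag f * as_ x i = f (x - c i) *: as_ x i.
Proof. by rewrite -e_as mulrA (diag_e e_orth) -scalerAl. Qed.

Lemma as_diag f x i : as_ x i * diag f = f x *: as_ x i.
Proof. by rewrite -as_e -mulrA (e_diag e_orth) -scalerAr. Qed.

Definition Kv i : V := diag (fun x => qpow q (x 0 i)).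
Definition Ev i : V := \sum_(x : vt) a x i.
Definition Fv i : V := \sum_(x : vt) as_ x i.

Lemma e_pathA x w : e x * pathA C e a x w = pathA C e a x w.
Proof. by case: w => [|i w] /=; rewrite ?(e_idem e_orth) // mulrA e_a. Qed.

Lemma pathS_e x w : pathS C e as_ x w * e x = pathS C e as_ x w.
Proof. by case: w => [|i w] /=; rewrite ?(e_idem e_orth) // -mulrA as_e. Qed.

Lemma prod_Ev w : \prod_(j <- w) Ev j = \sum_(x : vt) pathA C e a x w.
Proof.
elim: w => [|i w IH]; first by rewrite big_nil -e_sum.
rewrite big_cons IH /Ev mulr_suml; apply: eq_bigr => y _ /=.
rewrite mulr_sumr -[RHS](sum_if_eq (y - c i) (fun x => a y i * pathA C e a x w)).
by apply: eq_bigr => x _; rewrite -{1}e_pathA a_e_mul.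
Qed.

Lemma prod_Fv w : \prod_(j <- rev w) Fv j = \sum_(x : vt) pathS C e as_ x w.
Proof.
elim: w => [|i w IH]; first by rewrite big_nil -e_sum.
rewrite rev_cons -cats1 big_cat /= big_cons big_nil mulr1 IH /Fv mulr_sumr.
apply: eq_bigr => y _ /=; rewrite mulr_suml.
rewrite -[RHS](sum_if_eq (y - c i) (fun x => pathS C e as_ x w * as_ y i)).
apply: eq_bigr => x _; rewrite -{1}pathS_e -mulrA -[as_ y i]mulr1 e_as_mul mulr1.
by case: ifP => _; rewrite ?mulr0 // mulr1.
Qed.

Lemma Ev_Fv i j : Ev i * Fv j - Fv j * Ev i =
  if i == j then (q - q^-1)^-1 *: (Kv i - Kv i ^+ N.-1) else 0.
Proof.
have [_ [_ [_ [a_as [as_a _]]]]] := V_rels.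
have -> : Ev i * Fv j = \sum_(x : vt) a x i * as_ (x - c i + c j) j.
  rewrite /Ev /Fv mulr_suml; apply: eq_bigr => x _; rewrite mulr_sumr.
  rewrite -[RHS](sum_if_eq (x - c i + c j) (fun y => a x i * as_ y j)).
  by apply: eq_bigr => y _; rewrite -{1}e_as a_e_mul subr_eq.
have -> : Fv j * Ev i = \sum_(y : vt) as_ y j * a y i.
  rewrite /Ev /Fv mulr_suml; apply: eq_bigr => y _; rewrite mulr_sumr.
  rewrite -[RHS](sum_if_eq y (fun x => as_ y j * a x i)).
  by apply: eq_bigr => x _; rewrite -{1}e_a as_e_mul.
have [<-|ij] := eqVneq i j.
  rewrite [X in _ - X](reindex_inj (addIr (c i))) /= -sumrB.
  under eq_bigr do rewrite subrK a_as.
  rewrite /Kv (diagX e_orth e_sum) diagB diagZ; apply: eq_bigr => x _.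
  by rewrite (qpow_exp_predn q_prim) /qintZ mulrC.
rewrite [X in _ - X](reindex_inj (addIr (c j))) /= -sumrB big1 // => x _.
by rewrite as_a // addrK addrAC subrr.
Qed.

Lemma serre_Ev i j : i != j -> serre q C Ev i j = 0.
Proof.
have [_ [_ [_ [_ [_ [_ omega0]]]]]] := V_rels.
move=> ij; rewrite /serre.
under eq_bigr do rewrite -(prod_serre_word Ev) prod_Ev scaler_sumr.
by rewrite exchange_big big1 //= => x _; have [] := omega0 x i j ij.
Qed.

Lemma serre_Fv i j : i != j -> serre q C Fv i j = 0.
Proof.
have [_ [_ [_ [_ [_ [_ omega0]]]]]] := V_rels.
move=> ij; apply: (@scalerI _ _ ((-1) ^+ `|1 - C i j|%N)); first by rewrite signr_eq0.
rewrite scaler0.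
rewrite /serre -serre_sum_rev.
under eq_bigr do rewrite -(prod_rev_serre_word Fv) prod_Fv scaler_sumr.
by rewrite exchange_big big1 //= => x _; have [] := omega0 x i j ij.
Qed.

Lemma uq_rels_quiver : uq_rels q N C Kv Ev Fv.
Proof.
have [_ [_ [_ [_ [_ [nilp _]]]]]] := V_rels.
split.
  move=> i; rewrite /Kv (diagX e_orth e_sum) -(diag1 e_sum).
  by apply: eq_bigr => x _; rewrite (qpow_exp_order q_prim).
split.
  by move=> i j; rewrite /Kv !(diag_mul e_orth); apply: eq_bigr => x _; rewrite mulrC.
split.
  move=> i j; rewrite /Ev scaler_sumr mulr_sumr mulr_suml; apply: eq_bigr => x _.
  rewrite /Kv diag_a -scalerAl (diagX e_orth e_sum) a_diag scalerA.
  rewrite (qpow_exp_predn q_prim) -(qpowD q_prim) !mxE opprB addrCA subrr addr0.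
  by rewrite (qpow_intr q_prim).
split.
  move=> i j; rewrite /Fv scaler_sumr mulr_sumr mulr_suml; apply: eq_bigr => x _.
  rewrite /Kv diag_as -scalerAl (diagX e_orth e_sum) as_diag scalerA.
  rewrite (qpow_exp_predn q_prim) -(qpowD q_prim) !mxE addrAC subrr add0r.
  by rewrite -mulrNz (qpow_intr q_prim).
split; first exact: Ev_Fv.
split.
  move=> i; rewrite -(prod_nseq Ev) -(prod_nseq Fv) -{2}rev_nseq prod_Ev prod_Fv.
  by split; apply: big1 => x _; have [] := nilp x i.
by move=> i j ij; rewrite serre_Ev ?serre_Fv.
Qed.

End QuiverGenerators.

Lemma sum_scale_exchange (k : fieldType) (W : lmodType k) (I J L : finType)
    (f : I -> k) (g : I -> J -> L -> k) (B : J -> L -> W) :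
  \sum_(y : I) f y *: \sum_(z : J) \sum_(w : L) g y z w *: B z w
  = \sum_(z : J) \sum_(w : L) (\sum_(y : I) f y * g y z w) *: B z w.
Proof.
under eq_bigr do rewrite scaler_sumr.
under eq_bigr do under eq_bigr do rewrite scaler_sumr.
rewrite exchange_big; apply: eq_bigr => z _; rewrite exchange_big.
by apply: eq_bigr => w _; rewrite scaler_suml; apply: eq_bigr => y _; rewrite scalerA.
Qed.

Section HopfOnEpsilon.
Variables (k : fieldType) (m : nat) (q : k).
Hypothesis q_prim : (m.+2).-primitive_root q.
Local Notation N := m.+2.
Variables (t : nat) (C : 'M[int]_t) (U : algType k) (K E F : 'I_t -> U).
Hypothesis U_rels : uq_rels q N C K E F.
Local Notation vt := (vert N t).
Local Notation c := (ccol N C).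
Local Notation eps := (@epsx _ q N t U K).
Local Notation Kp := (@Kpow _ N t U K).
Local Notation orth := (eps_orth q_prim U_rels).
Local Notation sum1 := (eps_sum q_prim K).

Lemma counit_eps (epsU : U -> k) : alg_char epsU -> (forall i, epsU (K i) = 1) ->
  forall x, epsU (eps x) = if x == 0 then 1 else 0.
Proof.
move=> /alg_char_hom epsU_hom epsU_K x.
have epsU_Kp y : epsU (Kp y) = 1.
  rewrite /Kpow (alg_hom_prod epsU_hom) big1 // => i _.
  by rewrite (alg_homX epsU_hom) epsU_K expr1n.
rewrite /epsx (alg_homZ epsU_hom) (alg_hom_sum epsU_hom).
under eq_bigr do rewrite (alg_homZ epsU_hom) epsU_Kp.
rewrite -[LHS]/((N ^ t)%:R^-1 * \sum_(y : vt) (qpow q (- dotZ x y) * 1)).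
under eq_bigr do rewrite mulr1 -dotZNl.
rewrite (sum_qpow_dotZ q_prim) oppr_eq0.
by case: ifP => _; rewrite ?(inv_card_vert q_prim) ?mulr0.
Qed.

Section Antipode.
Variable SU : U -> U.
Hypotheses (SU_anti : alg_antihom SU) (SU_K : forall i, SU (K i) = K i ^+ N.-1).

Lemma antipode_Kpow y : SU (Kp y) = Kp (- y).
Proof.
have SU_Kexp i p : SU (K i ^+ p) = diag eps (fun x => qpow q (- x 0 i) ^+ p).
  by rewrite (alg_antihomX SU_anti) SU_K (K_exp_predn_diag q_prim U_rels) (diagX orth sum1).
rewrite (Kpow_diag q_prim K (- y)) /Kpow (alg_antihom_prod_comm SU_anti) => [|i j]; last first.
  by rewrite !SU_Kexp !(diag_mul orth); apply: eq_bigr => x _; rewrite mulrC.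
under eq_bigr do rewrite SU_Kexp.
rewrite (diag_prod orth sum1); apply: eq_bigr => x _.
congr (_ *: _); rewrite dotZNr /dotZ -sumrN (qpow_sum q_prim); apply: eq_bigr => i _.
by rewrite -(qpowM q_prim) mulNr.
Qed.

Lemma antipode_eps x : SU (eps x) = eps (- x).
Proof.
rewrite /epsx (alg_antihomZ SU_anti) (alg_antihom_sum SU_anti); congr (_ *: _).
rewrite [RHS](reindex_inj (@oppr_inj _)) /=; apply: eq_bigr => y _.
by rewrite (alg_antihomZ SU_anti) antipode_Kpow dotZNl dotZNr opprK.
Qed.

Hypothesis C_diag : forall i, C i i = 2.

Lemma antipode_epsE x i : SU (E i) = - (K i ^+ N.-1 * E i) ->
  SU (eps x * E i) = - (qpow q (x 0 i - 2%:R) *: (eps (- x + c i) * E i)).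
Proof.
move=> SU_E; have E_eps : E i * eps (- x) = eps (- x + c i) * E i.
  by rewrite (eps_E q_prim U_rels) addrK.
rewrite (alg_antihomM SU_anti) antipode_eps SU_E mulNr -mulrA E_eps mulrA.
rewrite (K_exp_predn_eps q_prim U_rels) -scalerAl; congr (- (qpow q _ *: _)).
by rewrite !mxE C_diag opprD opprK.
Qed.

Lemma antipode_Feps x i : SU (F i) = - (F i * K i) ->
  SU (F i * eps x) = - (qpow q (- x 0 i + 2%:R) *: (F i * eps (- x + c i))).
Proof.
move=> SU_F; rewrite (alg_antihomM SU_anti) antipode_eps SU_F mulrN mulrA.
rewrite (eps_F q_prim U_rels) -mulrA (eps_K q_prim U_rels) -scalerAr.
by congr (- (qpow q _ *: _)); rewrite !mxE C_diag.
Qed.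

End Antipode.

Section Coproduct.
Variables (TU : algType k) (i1 i2 : U -> TU) (DU : U -> TU).
Hypotheses (TU_tensor : is_tensor_square i1 i2) (DU_hom : alg_hom DU).
Hypothesis DU_K : forall i, DU (K i) = i1 (K i) * i2 (K i).
Local Notation tens := (tens i1 i2).

Lemma coproduct_Kpow y : DU (Kp y) = tens (Kp y) (Kp y).
Proof.
rewrite /Kpow (alg_hom_prod DU_hom) -(tens_prod TU_tensor); apply: eq_bigr => i _.
by rewrite (alg_homX DU_hom) -(tensX TU_tensor) DU_K.
Qed.

Lemma coproduct_eps x : DU (eps x) = \sum_(u : vt) tens (eps u) (eps (x - u)).
Proof.
have tens_Kp y : tens (Kp y) (Kp y) =
    \sum_(z : vt) \sum_(w : vt) qpow q (dotZ (z + w) y) *: tens (eps z) (eps w).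
  rewrite (Kpow_diag q_prim K y) /diag (tens_suml TU_tensor); apply: eq_bigr => z _.
  rewrite (tensZl TU_tensor) (tens_sumr TU_tensor) scaler_sumr; apply: eq_bigr => w _.
  by rewrite (tensZr TU_tensor) scalerA dotZDl (qpowD q_prim).
rewrite /epsx (alg_homZ DU_hom) (alg_hom_sum DU_hom).
under eq_bigr do rewrite (alg_homZ DU_hom) coproduct_Kpow tens_Kp.
rewrite sum_scale_exchange scaler_sumr; apply: eq_bigr => z _.
rewrite scaler_sumr -[RHS](sum_if_eq (x - z) (fun w => tens (eps z) (eps w))).
apply: eq_bigr => w _; rewrite scalerA (qpow_dotZ_orthogonal q_prim).
have -> : (z + w == x) = (w == x - z) by rewrite [RHS]eq_sym subr_eq eq_sym addrC.
by case: ifP => _; rewrite ?(inv_card_vert q_prim) ?scale1r // mulr0 scale0r.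
Qed.

Lemma coproduct_epsE x i : DU (E i) = i1 (E i) + i1 (K i) * i2 (E i) ->
  DU (eps x * E i) = \sum_(u : vt) qpow q (u 0 i) *: tens (eps u) (eps (x - u) * E i)
                     + \sum_(u : vt) tens (eps u * E i) (eps (x - u)).
Proof.
move=> DU_E; rewrite (alg_homM DU_hom) coproduct_eps DU_E (i1_tens TU_tensor).
rewrite -/(tens (K i) (E i)) mulrDr !mulr_suml addrC.
congr (_ + _); apply: eq_bigr => u _; rewrite (tensM TU_tensor) ?mulr1 //.
by rewrite (eps_K q_prim U_rels) (tensZl TU_tensor).
Qed.

Lemma coproduct_Feps x i : DU (F i) = i1 (F i) * i2 (K i ^+ N.-1) + i2 (F i) ->
  DU (F i * eps x) = \sum_(u : vt) tens (eps u) (F i * eps (x - u))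
    + \sum_(u : vt) qpow q (- (x - u) 0 i) *: tens (F i * eps u) (eps (x - u)).
Proof.
move=> DU_F; rewrite (alg_homM DU_hom) coproduct_eps DU_F (i2_tens TU_tensor (F i)).
rewrite -/(tens (F i) (K i ^+ N.-1)) mulrDl !mulr_sumr addrC.
congr (_ + _); apply: eq_bigr => u _; rewrite (tensM TU_tensor) ?mul1r //.
by rewrite (K_exp_predn_eps q_prim U_rels) (tensZr TU_tensor).
Qed.

End Coproduct.

End HopfOnEpsilon.

Lemma uqC_rels_alg_hom (k : fieldType) (q : k) (n t : nat) (C : 'M[int]_t)
    (V B : algType k) (e : vert n t -> V) (a as_ : vert n t -> 'I_t -> V) (f : V -> B) :
  alg_hom f -> uqC_rels q C e a as_ ->
  uqC_rels q C (fun x => f (e x)) (fun x i => f (a x i)) (fun x i => f (as_ x i)).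
Proof.
move=> f_hom [e_orth [e_sum [e_arrows [a_as [as_a [nilp omega0]]]]]].
have f_pathA x w : f (pathA C e a x w) = pathA C (fun x => f (e x)) (fun x i => f (a x i)) x w.
  by elim: w x => [|i w IH] x //=; rewrite (alg_homM f_hom) IH.
have f_pathS x w :
    f (pathS C e as_ x w) = pathS C (fun x => f (e x)) (fun x i => f (as_ x i)) x w.
  by elim: w x => [|i w IH] x //=; rewrite (alg_homM f_hom) IH.
have f_omega (P : vert n t -> seq 'I_t -> V) (P' : vert n t -> seq 'I_t -> B) x i j :
    (forall x w, f (P x w) = P' x w) ->
    f (omega q C P x i j) = omega q C P' x i j.
  move=> fP; rewrite /omega (alg_hom_sum f_hom); apply: eq_bigr => s _.
  by rewrite (alg_homZ f_hom) fP.
split.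
  by move=> x y; rewrite -(alg_homM f_hom) e_orth; case: ifP; rewrite ?(alg_hom0 f_hom).
split; first by rewrite -(alg_hom_sum f_hom) e_sum (alg_hom1 f_hom).
split.
  move=> x i; have [ea ae eas ase] := e_arrows x i.
  by split; rewrite -(alg_homM f_hom) ?ea ?ae ?eas ?ase.
split; first by move=> x i; rewrite -!(alg_homM f_hom) -(alg_homB f_hom) a_as (alg_homZ f_hom).
split; first by move=> x i j ij; rewrite -!(alg_homM f_hom) as_a.
split.
  by move=> x i; have [A0 S0] := nilp x i; rewrite -f_pathA -f_pathS A0 S0 (alg_hom0 f_hom).
move=> x i j ij; have [A0 S0] := omega0 x i j ij.
by rewrite -(f_omega _ _ _ _ _ f_pathA) -(f_omega _ _ _ _ _ f_pathS) A0 S0 (alg_hom0 f_hom).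
Qed.

Section Isomorphism.
Variables (k : fieldType) (m : nat) (q : k).
Hypothesis q_prim : (m.+2).-primitive_root q.
Local Notation N := m.+2.
Variables (t : nat) (C : 'M[int]_t).
Local Notation vt := (vert N t).
Variables (U : algType k) (K E F : 'I_t -> U).
Hypothesis U_uq : is_uq q N C K E F.
Variables (V : algType k) (e : vt -> V) (a as_ : vt -> 'I_t -> V).
Hypothesis V_uqC : is_uqC q C e a as_.
Local Notation eps := (@epsx _ q N t U K).
Local Notation Kp := (@Kpow _ N t U K).
Let U_rels := U_uq.1.
Let V_rels := V_uqC.1.

Lemma uqC_alg_hom_eq (B : algType k) (phi psi : V -> B) :
  alg_hom phi -> alg_hom psi ->
  (forall x i, [/\ phi (e x) = psi (e x), phi (a x i) = psi (a x i)
                   & phi (as_ x i) = psi (as_ x i)]) ->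
  phi =1 psi.
Proof.
move=> phi_hom psi_hom phi_psi.
apply: (V_uqC.2 B _ _ _ (uqC_rels_alg_hom phi_hom V_rels)).2 => // [x|x i]; last first.
  by have [_ -> ->] := phi_psi x i.
(* For t = 0 there is no index i to instantiate [phi_psi] with, but then e x = 1. *)
have [t0|t_gt0] := posnP t; last by have [] := phi_psi x (Ordinal t_gt0).
by have [_ ->] := e_trivial_vert V_rels t0 x; rewrite (alg_hom1 phi_hom) (alg_hom1 psi_hom).
Qed.

Lemma tau_exists : exists2 tau : V -> U, alg_hom tau &
  [/\ forall x, tau (e x) = eps x, forall x i, tau (a x i) = eps x * E i
     & forall x i, tau (as_ x i) = F i * eps x].
Proof.
have [tau tau_hom [tau_e tau_arrows]] := (V_uqC.2 U _ _ _ (uqC_rels_eps q_prim U_rels)).1.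
by exists tau => //; split=> [//|x i|x i]; have [] := tau_arrows x i.
Qed.

Lemma alg_hom_Kv_eps (sigma : U -> V) : alg_hom sigma ->
  (forall i, sigma (K i) = Kv q e i) -> forall x, sigma (eps x) = e x.
Proof.
move=> sigma_hom sigma_K x.
have sigma_Kp y : sigma (Kp y) = diag e (fun z => qpow q (dotZ z y)).
  rewrite /Kpow (alg_hom_prod sigma_hom).
  under eq_bigr do rewrite (alg_homX sigma_hom) sigma_K /Kv (diagX (e_orth V_rels) (e_sum V_rels)).
  rewrite (diag_prod (e_orth V_rels) (e_sum V_rels)); apply: eq_bigr => z _.
  by rewrite /dotZ (qpow_sum q_prim); congr (_ *: _); apply: eq_bigr => i _; rewrite (qpowM q_prim).
rewrite /epsx (alg_homZ sigma_hom) (alg_hom_sum sigma_hom).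
under eq_bigr do rewrite (alg_homZ sigma_hom) sigma_Kp diagZ.
rewrite diag_sum diagZ -[e x]scale1r -[RHS](sum_if_eq x (fun z => 1 *: e z)).
apply: eq_bigr => z _; rewrite (qpow_dotZ_orthogonal q_prim).
by case: eqP => [->|_]; rewrite ?(inv_card_vert q_prim) // mulr0 scale0r.
Qed.

Variable tau : V -> U.
Hypotheses (tau_hom : alg_hom tau) (tau_e : forall x, tau (e x) = eps x).
Hypotheses (tau_a : forall x i, tau (a x i) = eps x * E i)
  (tau_as : forall x i, tau (as_ x i) = F i * eps x).

Lemma tau_quiver_generators i :
  [/\ tau (Kv q e i) = K i, tau (Ev a i) = E i & tau (Fv as_ i) = F i].
Proof.
split.
- rewrite /Kv /diag (alg_hom_sum tau_hom) (K_diag q_prim K i).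
  by apply: eq_bigr => x _; rewrite (alg_homZ tau_hom) tau_e.
- rewrite /Ev (alg_hom_sum tau_hom) -[E i]mul1r -(eps_sum q_prim K) mulr_suml.
  by apply: eq_bigr => x _; rewrite tau_a.
- rewrite /Fv (alg_hom_sum tau_hom) -[F i]mulr1 -(eps_sum q_prim K) mulr_sumr.
  by apply: eq_bigr => x _; rewrite tau_as.
Qed.

Lemma tau_bijective : bijective tau.
Proof.
have [sigma sigma_hom sigma_gen] := (U_uq.2 V _ _ _ (uq_rels_quiver q_prim V_rels)).1.
have sigma_eps := alg_hom_Kv_eps sigma_hom (fun i => let: And3 sK _ _ := sigma_gen i in sK).
exists sigma.
  apply: (uqC_alg_hom_eq (alg_hom_comp tau_hom sigma_hom) (alg_hom_id V)) => x i /=.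
  have [_ sE sF] := sigma_gen i.
  rewrite tau_e tau_a tau_as !(alg_homM sigma_hom) sigma_eps sE sF /Ev /Fv mulr_sumr mulr_suml.
  split=> //.
    rewrite -[RHS](sum_if_eq x (fun y => a y i)); apply: eq_bigr => y _.
    by rewrite -[a y i]mulr1 (e_a_mul V_rels) mulr1 eq_sym.
  rewrite -[RHS](sum_if_eq x (fun y => as_ y i)); apply: eq_bigr => y _.
  by rewrite -[e x]mulr1 (as_e_mul V_rels) mulr1 eq_sym.
apply: (U_uq.2 U _ _ _ U_rels).2 (alg_hom_comp sigma_hom tau_hom) (alg_hom_id U) _ => i /=.
by have [-> -> ->] := sigma_gen i; apply: tau_quiver_generators.
Qed.

Lemma tau_counit (epsU : U -> k) (epsV : V -> k) : alg_char epsU -> alg_char epsV ->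
  (forall i, [/\ epsU (K i) = 1, epsU (E i) = 0 & epsU (F i) = 0]) ->
  (forall x i, [/\ epsV (e x) = (if x == 0 then 1 else 0),
                   epsV (a x i) = 0 & epsV (as_ x i) = 0]) ->
  forall v, epsU (tau v) = epsV v.
Proof.
move=> epsU_char epsV_char epsU_gen epsV_gen.
have epsU_hom := alg_char_hom epsU_char.
have epsU_eps := counit_eps q_prim epsU_char (fun i => let: And3 h _ _ := epsU_gen i in h).
apply: (uqC_alg_hom_eq (alg_hom_comp tau_hom epsU_hom) (alg_char_hom epsV_char)) => x i /=.
have [_ epsU_E epsU_F] := epsU_gen i; have [-> -> ->] := epsV_gen x i.
by rewrite tau_e tau_a tau_as !(alg_homM epsU_hom) epsU_eps epsU_E epsU_F mulr0 mul0r.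
Qed.

Lemma tau_antipode (SU : U -> U) (SV : V -> V) :
  alg_antihom SU -> alg_antihom SV -> (forall i, C i i = 2) ->
  (forall i, [/\ SU (K i) = K i ^+ N.-1, SU (E i) = - (K i ^+ N.-1 * E i)
               & SU (F i) = - (F i * K i)]) ->
  (forall x i, [/\ SV (e x) = e (- x),
      SV (a x i) = - (qpow q (x 0 i - 2%:R) *: a (- x + ccol N C i) i) &
      SV (as_ x i) = - (qpow q (- x 0 i + 2%:R) *: as_ (- x + ccol N C i) i)]) ->
  forall v, SU (tau v) = tau (SV v).
Proof.
move=> SU_anti SV_anti C_diag SU_gen SV_gen.
have SU_K i : SU (K i) = K i ^+ N.-1 by have [] := SU_gen i.
apply: (uqC_alg_hom_eq (alg_hom_comp tau_hom (alg_antihom_conv SU_anti))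
          (alg_hom_comp (alg_antihom_conv SV_anti) (alg_hom_conv tau_hom))) => x i /=.
have [_ SU_E SU_F] := SU_gen i; have [-> -> ->] := SV_gen x i.
rewrite !(alg_homN tau_hom) !(alg_homZ tau_hom) !tau_e !tau_a !tau_as.
by rewrite (antipode_eps q_prim U_rels SU_anti SU_K)
  (antipode_epsE q_prim U_rels SU_anti SU_K C_diag x SU_E)
  (antipode_Feps q_prim U_rels SU_anti SU_K C_diag x SU_F).
Qed.

Lemma tau_coproduct (TU TV : algType k) (iU1 iU2 : U -> TU) (iV1 iV2 : V -> TV)
    (DU : U -> TU) (DV : V -> TV) :
  is_tensor_square iU1 iU2 -> alg_hom DU -> alg_hom DV ->
  (forall i, [/\ DU (K i) = iU1 (K i) * iU2 (K i),
                 DU (E i) = iU1 (E i) + iU1 (K i) * iU2 (E i) &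
                 DU (F i) = iU1 (F i) * iU2 (K i ^+ N.-1) + iU2 (F i)]) ->
  (forall x, DV (e x) = \sum_(u : vt) iV1 (e u) * iV2 (e (x - u))) ->
  (forall x i, DV (a x i) =
      \sum_(u : vt) qpow q (u 0 i) *: (iV1 (e u) * iV2 (a (x - u) i))
    + \sum_(u : vt) iV1 (a u i) * iV2 (e (x - u))) ->
  (forall x i, DV (as_ x i) =
      \sum_(u : vt) iV1 (e u) * iV2 (as_ (x - u) i)
    + \sum_(u : vt) qpow q (- (x - u) 0 i) *: (iV1 (as_ u i) * iV2 (e (x - u)))) ->
  forall sigma : TV -> TU, alg_hom sigma ->
    (forall v, sigma (iV1 v) = iU1 (tau v) /\ sigma (iV2 v) = iU2 (tau v)) ->
  forall v, DU (tau v) = sigma (DV v).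
Proof.
move=> TU_tensor DU_hom DV_hom DU_gen DV_e DV_a DV_as sigma sigma_hom sigma_i.
have sigma_tens u w : sigma (iV1 u * iV2 w) = tens iU1 iU2 (tau u) (tau w).
  by rewrite (alg_homM sigma_hom) (sigma_i u).1 (sigma_i w).2.
have DU_K i : DU (K i) = iU1 (K i) * iU2 (K i) by have [] := DU_gen i.
apply: (uqC_alg_hom_eq (alg_hom_comp tau_hom DU_hom) (alg_hom_comp DV_hom sigma_hom)) => x i /=.
have [_ DU_E DU_F] := DU_gen i.
rewrite tau_e tau_a tau_as DV_e DV_a DV_as !(alg_homD sigma_hom) !(alg_hom_sum sigma_hom).
rewrite (coproduct_eps q_prim TU_tensor DU_hom DU_K).
rewrite (coproduct_epsE q_prim U_rels TU_tensor DU_hom DU_K x DU_E).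
rewrite (coproduct_Feps q_prim U_rels TU_tensor DU_hom DU_K x DU_F).
by split; [|congr (_ + _)..]; apply: eq_bigr => u _;
  rewrite ?(alg_homZ sigma_hom) sigma_tens ?tau_e ?tau_a ?tau_as.
Qed.

End Isomorphism.

Unset Implicit Arguments.

Theorem mainTheorem1 (k : fieldType) (n : nat) (q : k) (t : nat) (C : 'M[int]_t)
  (Hn : (5 <= n)%N) (Hq : n.-primitive_root q) (HC : simply_laced_cartan C)
  (* u_q(C), with its tensor square and Hopf structure *)
  (U TU : algType k) (K E F : 'I_t -> U) (HU : is_uq q n C K E F)
  (iU1 iU2 : U -> TU) (HTU : is_tensor_square iU1 iU2)
  (DU : U -> TU) (epsU : U -> k) (SU : U -> U)
  (HhU : uq_hopf n K E F iU1 iU2 DU epsU SU)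
  (* u_q^C, with its tensor square and Hopf structure *)
  (V TV : algType k) (e : vert n t -> V) (a as_ : vert n t -> 'I_t -> V)
  (HV : is_uqC q C e a as_)
  (iV1 iV2 : V -> TV) (HTV : is_tensor_square iV1 iV2)
  (DV : V -> TV) (epsV : V -> k) (SV : V -> V)
  (HhV : uqC_hopf q C e a as_ iV1 iV2 DV epsV SV) :
  exists tau : V -> U,
    (* tau is a well-defined algebra map with the prescribed values on generators *)
    alg_hom tau /\
    (forall x i, [/\ tau (e x) = epsx q K x,
                     tau (a x i) = epsx q K x * E i &
                     tau (as_ x i) = F i * epsx q K x]) /\
    (* it is bijective *)
    bijective tau /\
    (* it preserves the counit and the antipode *)
    (forall v, epsU (tau v) = epsV v) /\
    (forall v, SU (tau v) = tau (SV v)) /\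
    (* it preserves the coproduct: D_U o tau = (tau (x) tau) o D_V, where
       tau (x) tau is the algebra map TV -> TU with (tau (x) tau) (iV1 v) = iU1 (tau v)
       and (tau (x) tau) (iV2 v) = iU2 (tau v) *)
    (forall sigma : TV -> TU, alg_hom sigma ->
       (forall v, sigma (iV1 v) = iU1 (tau v) /\ sigma (iV2 v) = iU2 (tau v)) ->
       forall v, DU (tau v) = sigma (DV v)).
Proof.
have [m n_eq] : exists m, n = m.+2 by exists n.-2; lia.
subst n.
have [tau tau_hom [tau_e tau_a tau_as]] := tau_exists Hq HU HV.
have [DU_hom [epsU_char [SU_anti [DU_gen [epsU_gen SU_gen]]]]] := HhU.
have [DV_hom [epsV_char [SV_anti [DV_e [DV_a [DV_as [epsV_gen SV_gen]]]]]]] := HhV.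
exists tau; split=> //; split; first by move=> x i; rewrite tau_e tau_a tau_as.
split; first exact: (tau_bijective Hq HU HV tau_hom tau_e tau_a tau_as).
split; first exact: (tau_counit Hq HV tau_hom tau_e tau_a tau_as epsU_char epsV_char
  epsU_gen epsV_gen).
split; first exact: (tau_antipode Hq HU HV tau_hom tau_e tau_a tau_as SU_anti SV_anti HC.1
  SU_gen SV_gen).
exact: (tau_coproduct Hq HU HV tau_hom tau_e tau_a tau_as HTU DU_hom DV_hom
  DU_gen DV_e DV_a DV_as).
Qed.
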